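(* Let $(T_0,\widetilde T_0)$ be a joint pair of closed abstract Friedrichs operators on a complex Hilbert space $\mathcal{H}$, with $T_1:=\widetilde T_0^*$, $\widetilde T_1:=T_0^*$, $\mathcal{W}_0:=\operatorname{dom}T_0=\operatorname{dom}\widetilde T_0$ and $\mathcal{W}:=\operatorname{dom}T_1=\operatorname{dom}\widetilde T_1$ equipped with the graph norm of $T_1$. Let $\mathcal{V}$ be a closed subspace of $\mathcal{W}$ with $\mathcal{W}_0\subseteq\mathcal{V}$. Then $T_1|_{\mathcal{V}}:\mathcal{V}\to\mathcal{H}$ is bijective if and only if $\mathcal{V}\dotplus\operatorname{ker}T_1=\mathcal{W}$ (i.e. $\mathcal{V}\cap\operatorname{ker}T_1=\{0\}$ and $\mathcal{V}+\operatorname{ker}T_1=\mathcal{W}$).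
   Context: $\mathcal{H}$ is a complex Hilbert space with inner product $\langle\cdot,\cdot\rangle$ and norm $\|\cdot\|$. A pair $(T,\widetilde T)$ of densely defined linear operators on $\mathcal{H}$ is a joint pair of abstract Friedrichs operators if: (T1) $T$ and $\widetilde T$ have a common dense domain $\mathcal{D}$ and $\langle T\varphi,\psi\rangle=\langle\varphi,\widetilde T\psi\rangle$ for all $\varphi,\psi\in\mathcal{D}$; (T2) there is $c>0$ with $\|(T+\widetilde T)\varphi\|\le c\|\varphi\|$ for all $\varphi\in\mathcal{D}$; (T3) there is $\mu_0>0$ with $\langle (T+\widetilde T)\varphi,\varphi\rangle\ge 2\mu_0\|\varphi\|^2$ for all $\varphi\in\mathcal{D}$. A joint pair of closed abstract Friedrichs operators is such a pair $(T_0,\widetilde T_0)$ in which both operators are closed. One has $T_0\subseteq T_1$, $\widetilde T_0\subseteq\widetilde T_1$ and $\operatorname{dom}T_1=\operatorname{dom}\widetilde T_1$. *)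

From mathcomp Require Import all_boot all_order all_algebra.
From mathcomp Require Import reals.
From mathcomp Require Export complex.

Set Implicit Arguments.
Unset Strict Implicit.
Unset Printing Implicit Defensive.

Import Order.TTheory GRing.Theory Num.Theory.
Local Open Scope ring_scope.

Section Hilbert.
Variables (R : realType) (H : lmodType R[i]) (ip : H -> H -> R[i]).

Definition hnorm (x : H) : R := Num.sqrt (complex.Re (ip x x)).

Definition hcvg (u : nat -> H) (l : H) : Prop :=
  forall e : R, 0 < e -> exists N : nat, forall n, (N <= n)%N -> hnorm (u n - l) < e.

Definition hcauchy (u : nat -> H) : Prop :=
  forall e : R, 0 < e -> exists N : nat,
    forall m n, (N <= m)%N -> (N <= n)%N -> hnorm (u m - u n) < e.

Definition is_hilbert : Prop :=
  [/\ forall (a : R[i]) (x y z : H), ip (a *: x + y) z = a * ip x z + ip y z,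
      forall x y : H, ip y x = (ip x y)^*,
      forall x : H, 0 <= ip x x,
      forall x : H, ip x x = 0 -> x = 0
    & forall u : nat -> H, hcauchy u -> exists l, hcvg u l].

End Hilbert.

(* A (possibly unbounded) operator on H: a domain and an action
   (the action is only meaningful on the domain). *)
Record op (H : Type) := Op { dom : H -> Prop ; app : H -> H }.

Section Operators.
Variables (R : realType) (H : lmodType R[i]) (ip : H -> H -> R[i]).

Definition is_subspace (D : H -> Prop) : Prop :=
  D 0 /\ forall (a : R[i]) x y, D x -> D y -> D (a *: x + y).

Definition is_linear_op (T : op H) : Prop :=
  is_subspace (dom T) /\
  forall (a : R[i]) x y, dom T x -> dom T y -> app T (a *: x + y) = a *: app T x + app T y.

Definition is_dense (D : H -> Prop) : Prop :=
  forall (x : H) (e : R), 0 < e -> exists y, D y /\ hnorm ip (x - y) < e.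

Definition densely_defined (T : op H) : Prop := is_linear_op T /\ is_dense (dom T).

Definition closed_op (T : op H) : Prop :=
  forall (u : nat -> H) (x y : H), (forall n, dom T (u n)) ->
    hcvg ip u x -> hcvg ip (fun n => app T (u n)) y -> dom T x /\ app T x = y.

Definition is_adjoint (S A : op H) : Prop :=
  (forall u, dom A u <-> exists w, forall phi, dom S phi -> ip (app S phi) u = ip phi w) /\
  (forall u, dom A u -> forall phi, dom S phi -> ip (app S phi) u = ip phi (app A u)).

Definition friedrichs_pair (T Tt : op H) : Prop :=
  [/\ densely_defined T /\ densely_defined Tt,
      (forall x, dom T x <-> dom Tt x),
      (forall phi psi, dom T phi -> dom T psi -> ip (app T phi) psi = ip phi (app Tt psi)),
      (exists c : R, 0 < c /\ forall phi, dom T phi ->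
          hnorm ip (app T phi + app Tt phi) <= c * hnorm ip phi)
    & (exists mu0 : R, 0 < mu0 /\ forall phi, dom T phi ->
          real_complex R (2 * mu0 * hnorm ip phi ^+ 2) <= ip (app T phi + app Tt phi) phi)].

Definition closed_friedrichs_pair (T Tt : op H) : Prop :=
  [/\ friedrichs_pair T Tt, closed_op T & closed_op Tt].

(* V is a closed subspace of W := dom T1 equipped with the graph norm of T1 *)
Definition graph_closed_subspace (T1 : op H) (V : H -> Prop) : Prop :=
  [/\ forall x, V x -> dom T1 x,
      is_subspace V
    & forall (v : nat -> H) (u : H), (forall n, V (v n)) -> dom T1 u ->
        hcvg ip v u -> hcvg ip (fun n => app T1 (v n)) (app T1 u) -> V u].

End Operators.

(* Once T1 is known to be onto H the equivalence is linear algebra: T1 is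
   injective on V iff V meets ker T1 trivially, and T1 maps V onto H iff every
   w in W differs from some v in V by an element of ker T1.

   T1 = T0t^* is onto because T0t is coercive, Re <T0t phi, phi> >= mu0 |phi|^2
   by (T1) and (T3), hence bounded below.  Given f, minimise
   J psi = |T0t psi|^2 - 2 Re <psi, f> over dom T0t: J is bounded below, the
   parallelogram law makes T0t psi_n Cauchy along a minimising sequence, and the
   first variation of J at the limit g gives <T0t phi, g> = <phi, f> for every
   phi, that is g in dom T1 and T1 g = f. *)

From mathcomp Require Import all_boot all_order all_algebra.
From mathcomp Require Import reals complex.
From mathcomp Require Import ring lra.
From mathcomp Require Import boolp classical_sets.

Set Implicit Arguments.
Unset Strict Implicit.
Unset Printing Implicit Defensive.

Import Order.TTheory GRing.Theory Num.Theory.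
Local Open Scope ring_scope.
Local Open Scope classical_set_scope.

Section Scalars.
Variable R : realType.

Lemma ReM_real (r : R) (z : R[i]) : complex.Re (r%:C%C * z) = r * complex.Re z.
Proof. by case: z => a b /=; ring. Qed.

Lemma inv_succ_lt (d : R) : 0 < d ->
  exists N, forall n, (N <= n)%N -> n.+1%:R^-1 < d.
Proof.
move=> d_gt0; have [N] := ltr_add_invr d_gt0; rewrite add0r => N_lt.
exists N => n le_Nn; apply: le_lt_trans N_lt.
by rewrite lef_pV2 ?posrE ?ltr0n // ler_nat.
Qed.

Lemma quadratic_ge0_linear_eq0 (a b : R) :
  0 <= b -> (forall t, 0 <= 2 * t * a + t ^+ 2 * b) -> a = 0.
Proof.
move=> b_ge0 /(_ (- a / (b + 1))); set t := _ / _ => quad_ge0.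
have a_eq : a = - (t * (b + 1)).
  by rewrite /t !mulNr divfK ?opprK ?lt0r_neq0 ?ltr_wpDl.
rewrite a_eq in quad_ge0 *; have -> : t = 0 by nra.
by rewrite mul0r oppr0.
Qed.

End Scalars.

Section Subspaces.
Variables (R : realType) (H : lmodType R[i]).
Implicit Types (D : H -> Prop) (T : op H).

Lemma subspace0 D : is_subspace D -> D 0.
Proof. by case. Qed.

Lemma subspaceZ D a x : is_subspace D -> D x -> D (a *: x).
Proof. by move=> [D0 DD] Dx; have := DD a x 0 Dx D0; rewrite addr0. Qed.

Lemma subspaceD D x y : is_subspace D -> D x -> D y -> D (x + y).
Proof. by move=> [_ DD] Dx Dy; have := DD 1 x y Dx Dy; rewrite scale1r. Qed.

Lemma subspaceB D x y : is_subspace D -> D x -> D y -> D (x - y).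
Proof. by move=> [_ DD] Dx Dy; have := DD (-1) y x Dy Dx; rewrite scaleN1r addrC. Qed.

Lemma linear_op0 T : is_linear_op T -> app T 0 = 0.
Proof.
move=> [[T0 _] Tlin]; have := Tlin 1 0 0 T0 T0; rewrite !scale1r addr0.
by move=> T00; apply: (addrI (app T 0)); rewrite addr0 -T00.
Qed.

Lemma linear_opZ T a x : is_linear_op T -> dom T x -> app T (a *: x) = a *: app T x.
Proof.
move=> T_lin Tx; have [[T0 _] Tlin] := T_lin.
by have := Tlin a x 0 Tx T0; rewrite !addr0 linear_op0 // addr0.
Qed.

Lemma linear_opD T x y : is_linear_op T -> dom T x -> dom T y ->
  app T (x + y) = app T x + app T y.
Proof. by move=> [_ Tlin] Tx Ty; have := Tlin 1 x y Tx Ty; rewrite !scale1r. Qed.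

Lemma bijective_iff_direct_sum_ker T (V : H -> Prop) :
  (forall x y, dom T x -> dom T y ->
     dom T (x - y) /\ app T (x - y) = app T x - app T y) ->
  (forall f, exists u, dom T u /\ app T u = f) ->
  (forall x, V x -> dom T x) -> (forall x y, V x -> V y -> V (x - y)) ->
  ((forall x y, V x -> V y -> app T x = app T y -> x = y) /\
   (forall f, exists v, V v /\ app T v = f))
  <->
  ((forall x, V x -> app T x = 0 -> x = 0) /\
   (forall w, dom T w -> exists v k, [/\ V v, dom T k, app T k = 0 & w = v + k])).
Proof.
move=> TB T_surj VT VB; split=> [[V_inj V_surj]|[V_ker V_ker_span]]; split.
- move=> x Vx Tx0; have [_] := TB x x (VT x Vx) (VT x Vx); rewrite !subrr => T00.
  have V0 : V 0 by rewrite -(subrr x); apply: VB.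
  by apply: V_inj Vx V0 _; rewrite Tx0 T00.
- move=> w Tw; have [v [Vv Tv]] := V_surj (app T w).
  have [Tk Tk_eq] := TB w v Tw (VT v Vv).
  by exists v, (w - v); split; rewrite ?Tk_eq ?Tv ?subrr // addrC subrK.
- move=> x y Vx Vy Txy; apply/eqP; rewrite -subr_eq0; apply/eqP.
  apply: V_ker (VB x y Vx Vy) _.
  by have [_ ->] := TB x y (VT x Vx) (VT y Vy); rewrite Txy subrr.
- move=> f; have [u [Tu <-]] := T_surj f.
  have [v [k [Vv Tk Tk0 u_eq]]] := V_ker_span u Tu.
  exists v; split=> //; have [_] := TB u k Tu Tk.
  by rewrite {1}u_eq addrK Tk0 subr0.
Qed.

End Subspaces.

Section Hilbert.
Variables (R : realType) (H : lmodType R[i]) (ip : H -> H -> R[i]).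
Hypothesis ip_hilbert : is_hilbert ip.

Lemma ipDl x y z : ip (x + y) z = ip x z + ip y z.
Proof. by case: ip_hilbert => lin _ _ _ _; have := lin 1 x y z; rewrite scale1r mul1r. Qed.

Lemma ip0l z : ip 0 z = 0.
Proof. by apply: (addrI (ip 0 z)); rewrite -ipDl !addr0. Qed.

Lemma ipZl a x z : ip (a *: x) z = a * ip x z.
Proof. by case: ip_hilbert => lin _ _ _ _; have := lin a x 0 z; rewrite addr0 ip0l addr0. Qed.

Lemma ipNl x z : ip (- x) z = - ip x z.
Proof. by rewrite -scaleN1r ipZl mulN1r. Qed.

Lemma ip_conj x y : ip y x = (ip x y)^*.
Proof. by case: ip_hilbert. Qed.

Lemma ip0r z : ip z 0 = 0.
Proof. by rewrite ip_conj ip0l raddf0. Qed.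

Lemma ipBr x y z : ip z (x - y) = ip z x - ip z y.
Proof. by rewrite ip_conj ipDl ipNl raddfB /= -!ip_conj. Qed.

Definition rdot x y := complex.Re (ip x y).
Definition nsq x := rdot x x.

Lemma rdotC x y : rdot x y = rdot y x.
Proof. by rewrite /rdot (ip_conj y x); case: (ip y x). Qed.

Lemma rdotDl x y z : rdot (x + y) z = rdot x z + rdot y z.
Proof. by rewrite /rdot ipDl; case: (ip x z); case: (ip y z). Qed.

Lemma rdotNl x z : rdot (- x) z = - rdot x z.
Proof. by rewrite /rdot ipNl; case: (ip x z). Qed.

Lemma rdotBl x y z : rdot (x - y) z = rdot x z - rdot y z.
Proof. by rewrite rdotDl rdotNl. Qed.

Lemma rdotZl (r : R) x z : rdot (r%:C%C *: x) z = r * rdot x z.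
Proof. by rewrite /rdot ipZl ReM_real. Qed.

Lemma rdotDr x y z : rdot z (x + y) = rdot z x + rdot z y.
Proof. by rewrite rdotC rdotDl !(rdotC z). Qed.

Lemma rdotBr x y z : rdot z (x - y) = rdot z x - rdot z y.
Proof. by rewrite rdotC rdotBl !(rdotC z). Qed.

Lemma rdotZr (r : R) x z : rdot z (r%:C%C *: x) = r * rdot z x.
Proof. by rewrite rdotC rdotZl rdotC. Qed.

Lemma rdot0r z : rdot z 0 = 0.
Proof. by rewrite /rdot ip0r. Qed.

Lemma rdotZil x z : rdot ('i%C *: x) z = - complex.Im (ip x z).
Proof. by rewrite /rdot ipZl mulrC ReiNIm. Qed.

Lemma nsq_ge0 x : 0 <= nsq x.
Proof. by case: ip_hilbert => _ _ /(_ x) + _ _; rewrite lecE => /andP[]. Qed.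

Lemma nsq_eq0 x : nsq x = 0 -> x = 0.
Proof.
case: ip_hilbert => _ _ /(_ x) + /(_ x) ip_eq0 _; rewrite lecE /nsq /rdot.
move=> /andP[/eqP im0 _] re0; apply: ip_eq0.
by move: im0 re0; case: (ip x x) => a b /= -> ->.
Qed.

Lemma hnorm_sqr x : hnorm ip x ^+ 2 = nsq x.
Proof. by rewrite sqr_sqrtr // nsq_ge0. Qed.

Lemma hnorm_ge0 x : 0 <= hnorm ip x.
Proof. exact: sqrtr_ge0. Qed.

Lemma hnorm_lt_sqr x e : 0 < e -> (hnorm ip x < e) <-> (nsq x < e ^+ 2).
Proof.
move=> e_gt0; rewrite -hnorm_sqr ltr_pXn2r ?nnegrE ?hnorm_ge0 ?ltW //.
Qed.

Lemma nsqD x y : nsq (x + y) = nsq x + 2 * rdot x y + nsq y.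
Proof. by rewrite /nsq rdotDl !rdotDr (rdotC y x); ring. Qed.

Lemma nsqB x y : nsq (x - y) = nsq x - 2 * rdot x y + nsq y.
Proof. by rewrite /nsq rdotBl !rdotBr (rdotC y x); ring. Qed.

Lemma nsqZ (r : R) x : nsq (r%:C%C *: x) = r ^+ 2 * nsq x.
Proof. by rewrite /nsq rdotZl rdotZr; ring. Qed.

Lemma rdot_amgm (t : R) x y : 2 * t * rdot x y <= t ^+ 2 * nsq x + nsq y.
Proof. by have := nsq_ge0 (t%:C%C *: x - y); rewrite nsqB nsqZ rdotZl; lra. Qed.

Lemma rdot_sqr_le x y : rdot x y ^+ 2 <= nsq x * nsq y.
Proof.
have [/nsq_eq0 ->|ny_neq0] := eqVneq (nsq y) 0.
  by rewrite rdot0r expr0n /= /nsq rdot0r mulr0.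
have ny_gt0 : 0 < nsq y by rewrite lt_def ny_neq0 nsq_ge0.
have := nsq_ge0 ((nsq y)%:C%C *: x - (rdot x y)%:C%C *: y).
rewrite nsqB !nsqZ rdotZl rdotZr => comb_ge0.
have : 0 <= nsq y * (nsq y * nsq x - rdot x y ^+ 2) by nra.
by rewrite pmulr_rge0 //; lra.
Qed.

Lemma rdot_le_hnorm x y : `|rdot x y| <= hnorm ip x * hnorm ip y.
Proof.
rewrite -(@ler_pXn2r _ 2) ?nnegrE ?mulr_ge0 ?hnorm_ge0 //.
by rewrite real_normK ?num_real // exprMn !hnorm_sqr rdot_sqr_le.
Qed.

Lemma dense_rdot_eq0 (D : H -> Prop) z :
  is_dense ip D -> (forall phi, D phi -> rdot phi z = 0) -> z = 0.
Proof.
move=> D_dense rdot_eq0; apply: nsq_eq0.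
have := nsq_ge0 z; rewrite le_eqVlt => /orP[/eqP <-//|nz_gt0].
have sqrt_gt0 : 0 < Num.sqrt (nsq z) by rewrite sqrtr_gt0.
have [y [Dy]] := D_dense z _ sqrt_gt0.
rewrite hnorm_lt_sqr // sqr_sqrtr ?nsq_ge0 // nsqB (rdotC z y) rdot_eq0 //.
by have := nsq_ge0 y; lra.
Qed.

Lemma hcvg_rdot u g y (e : R) : hcvg ip u g -> 0 < e ->
  exists N, forall n, (N <= n)%N -> `|rdot (u n) y - rdot g y| < e.
Proof.
move=> u_cvg e_gt0; have k_gt0 : 0 < hnorm ip y + 1 by rewrite ltr_wpDl ?hnorm_ge0.
have [N uN] := u_cvg _ (divr_gt0 e_gt0 k_gt0); exists N => n /uN un_near.
rewrite -rdotBl; apply: le_lt_trans (rdot_le_hnorm _ _) _.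
apply: le_lt_trans (ler_wpM2r (hnorm_ge0 _) (ltW un_near)) _.
by rewrite -[X in _ < X](divfK (lt0r_neq0 k_gt0)) ltr_pM2l ?divr_gt0 // ltrDl.
Qed.

Lemma coercive_bounded_below (S : op H) (mu : R) : 0 < mu ->
  (forall phi, dom S phi -> mu * nsq phi <= rdot (app S phi) phi) ->
  forall phi, dom S phi -> mu ^+ 2 * nsq phi <= nsq (app S phi).
Proof.
move=> mu_gt0 S_coer phi Sphi; have := rdot_amgm mu phi (app S phi).
have := ler_wpM2l (ltW mu_gt0) (S_coer phi Sphi).
rewrite (rdotC phi) mulrA -expr2; nra.
Qed.

Section Minimization.
Variables (S : op H) (c : R) (f : H).
Hypotheses (S_lin : is_linear_op S) (c_gt0 : 0 < c).
Hypothesis S_bounded_below : forall phi, dom S phi -> c * nsq phi <= nsq (app S phi).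

Let S_sub : is_subspace (dom S) := S_lin.1.

Definition energy psi := nsq (app S psi) - 2 * rdot psi f.

Definition energy_inf := inf (energy @` dom S).

Lemma energy_lb psi : dom S psi -> - nsq f <= c * energy psi.
Proof.
move=> Spsi; have := ler_wpM2l (ltW c_gt0) (S_bounded_below Spsi).
have := rdot_amgm c psi f; rewrite /energy mulrA -expr2; nra.
Qed.

Lemma has_inf_energy : has_inf (energy @` dom S).
Proof.
split; first by exists (energy 0), 0; first exact: subspace0.
exists (- nsq f / c) => _ [psi Spsi <-].
by rewrite ler_pdivrMr // mulrC energy_lb.
Qed.

Lemma energy_inf_le psi : dom S psi -> energy_inf <= energy psi.
Proof. by move=> Spsi; apply: (ge_inf has_inf_energy.2); exists psi. Qed.

Lemma exists_minimizing_seq : exists ps : nat -> H,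
  forall n, dom S (ps n) /\ energy (ps n) < energy_inf + n.+1%:R^-1.
Proof.
have /choice[ps ps_min] : forall n : nat,
    exists psi, dom S psi /\ energy psi < energy_inf + n.+1%:R^-1.
  move=> n; have n_gt0 : (0 : R) < n.+1%:R^-1 by rewrite invr_gt0 ltr0n.
  by have [_ [psi Spsi <-] lt_psi] := inf_adherent n_gt0 has_inf_energy; exists psi.
by exists ps.
Qed.

Lemma energy_parallelogram a b : dom S a -> dom S b ->
  nsq (app S a - app S b) <= 2 * (energy a + energy b) - 4 * energy_inf.
Proof.
move=> Sa Sb; have Sab := subspaceD S_sub Sa Sb.
have := energy_inf_le (subspaceZ (2^-1)%:C%C S_sub Sab).
rewrite /energy linear_opZ // linear_opD // nsqZ nsqD rdotZl rdotDl nsqB.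
lra.
Qed.

Lemma energy_shift a phi (t : R) : dom S a -> dom S phi ->
  energy (a + t%:C%C *: phi) = energy a
    + 2 * t * (rdot (app S a) (app S phi) - rdot phi f) + t ^+ 2 * nsq (app S phi).
Proof.
move=> Sa Sphi; rewrite /energy linear_opD ?linear_opZ //; last exact: subspaceZ.
by rewrite nsqD nsqZ rdotZr rdotDl rdotZl; ring.
Qed.

Section MinimizingSequence.
Variable ps : nat -> H.
Hypothesis ps_min : forall n, dom S (ps n) /\ energy (ps n) < energy_inf + n.+1%:R^-1.

Lemma minimizing_cauchy : hcauchy ip (fun n => app S (ps n)).
Proof.
move=> e e_gt0; have [N N_small] := inv_succ_lt (divr_gt0 (exprn_gt0 2 e_gt0) (ltr0n _ 4)).
exists N => n k le_Nn le_Nk; rewrite hnorm_lt_sqr //.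
have := energy_parallelogram (ps_min n).1 (ps_min k).1.
have := (ps_min n).2; have := (ps_min k).2.
have := N_small n le_Nn; have := N_small k le_Nk.
rewrite !ltr_pdivlMr //; set eps_n := (n.+1%:R : R)^-1; set eps_k := (k.+1%:R : R)^-1.
lra.
Qed.

Lemma minimizing_variation n phi (t : R) : dom S phi ->
  - n.+1%:R^-1 < 2 * t * (rdot (app S (ps n)) (app S phi) - rdot phi f)
                 + t ^+ 2 * nsq (app S phi).
Proof.
move=> Sphi; have [Sn Jn] := ps_min n.
have := energy_inf_le (subspaceD S_sub Sn (subspaceZ t%:C%C S_sub Sphi)).
move: Jn; rewrite energy_shift //; set eps := n.+1%:R^-1; lra.
Qed.

Lemma minimizing_limit g : hcvg ip (fun n => app S (ps n)) g ->
  forall phi, dom S phi -> rdot (app S phi) g = rdot phi f.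
Proof.
move=> g_lim phi Sphi; apply/eqP; rewrite -subr_eq0 rdotC; apply/eqP.
apply: (@quadratic_ge0_linear_eq0 _ _ (nsq (app S phi))) => [|t]; first exact: nsq_ge0.
apply/ler_addgt0Pr => e e_gt0.
have [N1 N1_near] := hcvg_rdot ((2 * t)%:C%C *: app S phi) g_lim (divr_gt0 e_gt0 (ltr0n _ 2)).
have [N2 N2_small] := inv_succ_lt (divr_gt0 e_gt0 (ltr0n _ 2)).
have := N1_near _ (leq_maxl N1 N2); have := N2_small _ (leq_maxr N1 N2).
have := minimizing_variation (maxn N1 N2) t Sphi.
rewrite !rdotZr ltr_norml; set eps := ((maxn N1 N2).+1%:R : R)^-1.
by move=> var small /andP[_ near]; lra.
Qed.

End MinimizingSequence.

Lemma exists_weak_solution : exists g, forall phi, dom S phi -> ip (app S phi) g = ip phi f.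
Proof.
have [ps ps_min] := exists_minimizing_seq.
have [_ _ _ _ complete] := ip_hilbert.
have [g g_lim] := complete _ (minimizing_cauchy ps_min).
have re_eq := minimizing_limit ps_min g_lim.
exists g => phi Sphi; apply/eqP; rewrite eq_complex; apply/andP; split; apply/eqP.
  exact: re_eq.
have := re_eq _ (subspaceZ 'i%C S_sub Sphi).
by rewrite linear_opZ // !rdotZil => /oppr_inj.
Qed.

End Minimization.

Section Adjoint.
Variables (S A : op H).
Hypotheses (S_dense : is_dense ip (dom S)) (SA : is_adjoint ip S A).

Lemma adjoint_eq u w : (forall phi, dom S phi -> ip (app S phi) u = ip phi w) ->
  dom A u /\ app A u = w.
Proof.
case: SA => domA appA Su_eq; have Au : dom A u by apply/domA; exists w.
split=> //; apply/eqP; rewrite -subr_eq0; apply/eqP.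
apply: (dense_rdot_eq0 S_dense) => phi Sphi.
by rewrite /rdot ipBr -appA // Su_eq // subrr.
Qed.

Lemma adjointB x y : dom A x -> dom A y ->
  dom A (x - y) /\ app A (x - y) = app A x - app A y.
Proof.
have [_ appA] := SA; move=> Ax Ay; apply: adjoint_eq => phi Sphi.
by rewrite !ipBr !appA.
Qed.

Lemma bounded_below_adjoint_surj (c : R) : is_linear_op S -> 0 < c ->
  (forall phi, dom S phi -> c * nsq phi <= nsq (app S phi)) ->
  forall f, exists u, dom A u /\ app A u = f.
Proof.
move=> S_lin c_gt0 S_bounded_below f.
have [g g_sol] := exists_weak_solution f S_lin c_gt0 S_bounded_below.
by exists g; apply: adjoint_eq.
Qed.

End Adjoint.

Lemma friedrichs_coercive (T Tt : op H) : friedrichs_pair ip T Tt ->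
  exists2 mu, 0 < mu & forall phi, dom Tt phi -> mu * nsq phi <= rdot (app Tt phi) phi.
Proof.
case=> _ domT_Tt T_Tt _ [mu [mu_gt0 T_Tt_coer]]; exists mu => // phi Ttphi.
have Tphi : dom T phi by apply/domT_Tt.
move: (T_Tt_coer phi Tphi); rewrite lecE => /andP[_] /=.
rewrite hnorm_sqr -/(rdot _ _) rdotDl.
have -> : rdot (app T phi) phi = rdot (app Tt phi) phi.
  by rewrite /rdot T_Tt // -/(rdot _ _) rdotC.
lra.
Qed.

Lemma friedrichs_adjoint_surj (T Tt A : op H) :
  friedrichs_pair ip T Tt -> is_adjoint ip Tt A ->
  forall f, exists u, dom A u /\ app A u = f.
Proof.
move=> TTt TtA; have [[_ [Tt_lin Tt_dense]] _ _ _ _] := TTt.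
have [mu mu_gt0 Tt_coer] := friedrichs_coercive TTt.
apply: (bounded_below_adjoint_surj Tt_dense TtA Tt_lin (exprn_gt0 2 mu_gt0)).
exact: coercive_bounded_below.
Qed.

End Hilbert.

Theorem lemma3p10 (R : realType) (H : lmodType R[i]) (ip : H -> H -> R[i])
  (T0 T0t T1 : op H) (V : H -> Prop) :
  is_hilbert ip ->
  closed_friedrichs_pair ip T0 T0t ->
  is_adjoint ip T0t T1 ->
  graph_closed_subspace ip T1 V ->
  (forall x, dom T0 x -> V x) ->
  ((forall x y, V x -> V y -> app T1 x = app T1 y -> x = y) /\
   (forall f : H, exists v, V v /\ app T1 v = f))
  <->
  ((forall x, V x -> app T1 x = 0 -> x = 0) /\
   (forall w, dom T1 w -> exists v k, [/\ V v, dom T1 k, app T1 k = 0 & w = v + k])).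
Proof.
move=> ip_hilbert [T0_T0t _ _] T0t_T1 [V_T1 V_sub _] _.
have [[_ [_ T0t_dense]] _ _ _ _] := T0_T0t.
apply: bijective_iff_direct_sum_ker => //.
- exact: (@adjointB _ _ _ ip_hilbert _ _ T0t_dense T0t_T1).
- exact: (@friedrichs_adjoint_surj _ _ _ ip_hilbert _ _ _ T0_T0t T0t_T1).
- by move=> x y; apply: subspaceB.
Qed.
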